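(* Let $\mathfrak{A}$ be a $(\circ,\wedge,\mathsf{A})$-algebra and $\theta$ a representation of $\mathfrak{A}$ by partial functions. Then $\theta$ is atomic if and only if $\theta$ is complete.
   Context: A $(\circ,\wedge,\mathsf{A})$-algebra is a set with two binary operations $\circ,\wedge$ and one unary operation $\mathsf{A}$. An algebra of partial functions of this signature is a set of partial functions, with base $X$ the union of all their domains and ranges, closed under: composition $f\circ g=\{(x,z)\mid \exists y\,(x,y)\in f,(y,z)\in g\}$; intersection; antidomain $\mathsf{A}(f)=\{(x,x)\mid x\in X, x\notin\mathrm{dom}(f)\}$. A representation by partial functions is an isomorphism onto such an algebra. The order on $\mathfrak{A}$ is $a\le b\iff a\wedge b=a$; a representable algebra has least element $0=\mathsf{A}(a)\circ a$. An atom is a minimal nonzero element. A representation $\theta$ is atomic if whenever $(x,y)\in\theta(a)$ for some $a\in\mathfrak{A}$, then $(x,y)\in\theta(b)$ for some atom $b$. A representation is complete if it is meet complete (for every nonempty $S$ with $\bigwedge S$ existing, $\theta(\bigwedge S)=\bigcap\theta[S]$), equivalently join complete (for every $S$ with $\bigvee S$ existing, $\theta(\bigvee S)=\bigcup\theta[S]$); these are equivalent for this signature. *)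

Set Implicit Arguments.

Section Defs.
Variables (T : Type) (comp meet : T -> T -> T) (ad : T -> T).

Definition le (a b : T) : Prop := meet a b = a.

Definition is_least (z : T) : Prop := forall b, le z b.

Definition atom (a : T) : Prop :=
  ~ is_least a /\ forall b, le b a -> is_least b \/ b = a.

Definition is_glb (S : T -> Prop) (m : T) : Prop :=
  (forall s, S s -> le m s) /\
  (forall l, (forall s, S s -> le l s) -> le l m).

Variables (X : Type) (theta : T -> X -> X -> Prop).

Definition is_pfun_rep : Prop :=
  (forall a x y z, theta a x y -> theta a x z -> y = z) /\
  (forall a b, (forall x y, theta a x y <-> theta b x y) -> a = b) /\
  (forall a b x z, theta (comp a b) x z <-> exists y, theta a x y /\ theta b y z) /\
  (forall a b x y, theta (meet a b) x y <-> theta a x y /\ theta b x y) /\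
  (forall a x y, theta (ad a) x y <-> x = y /\ ~ (exists z, theta a x z)) /\
  (forall x, exists a y, theta a x y \/ theta a y x).

Definition atomic_rep : Prop :=
  forall a x y, theta a x y -> exists b, atom b /\ theta b x y.

Definition complete_rep : Prop :=
  forall (S : T -> Prop) (m : T), (exists s, S s) -> is_glb S m ->
    forall x y, theta m x y <-> (forall s, S s -> theta s x y).
End Defs.

(* In a representation by partial functions the order is inclusion of graphs,
   and the zero [A(a) ; a] is the empty function.  The key fact is that a lower
   bound [c] of all elements whose graph contains a pair [(x, y)] must be empty
   when it misses [(x, y)]: it is contained in some [a] through [(x, y)], so by
   functionality [x] is not in the domain of [c], and then [c <= A(c) ; a], whose
   domain avoids that of [c].  Hence the greatest lower bound of the elements
   through [(x, y)] is either an atom containing [(x, y)] or zero, which gives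
   atomicity from completeness.  Conversely an atom through [(x, y)] lies below
   every element through [(x, y)], hence below their meet. *)

From Stdlib Require Import Classical.

Set Implicit Arguments.

Section PartialFunctionRepresentation.
Variables (T : Type) (comp meet : T -> T -> T) (ad : T -> T)
  (X : Type) (theta : T -> X -> X -> Prop).
Hypothesis Hrep : is_pfun_rep comp meet ad theta.

Lemma theta_functional a x y z : theta a x y -> theta a x z -> y = z.
Proof. apply Hrep. Qed.

Lemma theta_inj a b : (forall x y, theta a x y <-> theta b x y) -> a = b.
Proof. apply Hrep. Qed.

Lemma theta_comp a b x z : theta (comp a b) x z <-> exists y, theta a x y /\ theta b y z.
Proof. apply Hrep. Qed.

Lemma theta_meet a b x y : theta (meet a b) x y <-> theta a x y /\ theta b x y.
Proof. apply Hrep. Qed.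

Lemma theta_ad a x y : theta (ad a) x y <-> x = y /\ ~ (exists z, theta a x z).
Proof. apply Hrep. Qed.

Lemma le_iff_subrel a b : le meet a b <-> (forall x y, theta a x y -> theta b x y).
Proof.
  unfold le; split.
  - intros Hab x y Hxy. rewrite <- Hab in Hxy. apply theta_meet in Hxy. tauto.
  - intros Hsub. apply theta_inj. intros x y. rewrite theta_meet. firstorder.
Qed.

Lemma le_antisym a b : le meet a b -> le meet b a -> a = b.
Proof.
  rewrite !le_iff_subrel. intros Hab Hba. apply theta_inj. firstorder.
Qed.

Lemma theta_ad_comp_not_dom a b x y : theta (comp (ad a) b) x y -> ~ (exists z, theta a x z).
Proof.
  rewrite theta_comp. intros (w & Hw & _). apply theta_ad in Hw.
  destruct Hw as [<- Hnd]. exact Hnd.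
Qed.

Lemma theta_zero_empty a x y : ~ theta (comp (ad a) a) x y.
Proof.
  intros Hxy. apply (theta_ad_comp_not_dom Hxy).
  apply theta_comp in Hxy. destruct Hxy as (w & Hw & Hwy).
  apply theta_ad in Hw. destruct Hw as [<- _]. eauto.
Qed.

Lemma least_iff_empty a : is_least meet a <-> (forall x y, ~ theta a x y).
Proof.
  split.
  - intros Hl x y Hxy.
    apply (theta_zero_empty (a := a) (x := x) (y := y)).
    exact (proj1 (le_iff_subrel _ _) (Hl _) _ _ Hxy).
  - intros He b. apply le_iff_subrel. intros x y Hxy. exfalso. exact (He _ _ Hxy).
Qed.

Lemma lower_bound_missing_pair_empty a c x y :
  theta a x y -> (forall d, theta d x y -> le meet c d) -> ~ theta c x y ->
  forall u v, ~ theta c u v.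
Proof.
  intros Haxy Hlb Hcxy u v Hcuv.
  assert (Hx : ~ exists w, theta c x w).
  { intros [w Hcxw].
    assert (Haxw : theta a x w) by (apply (le_iff_subrel c a); auto).
    rewrite (theta_functional Haxw Haxy) in Hcxw. contradiction. }
  assert (Hd : theta (comp (ad c) a) x y).
  { apply theta_comp. exists x. split; [apply theta_ad; auto | exact Haxy]. }
  assert (Hcuv' : theta (comp (ad c) a) u v)
    by exact (proj1 (le_iff_subrel _ _) (Hlb _ Hd) _ _ Hcuv).
  exact (theta_ad_comp_not_dom Hcuv' (ex_intro _ v Hcuv)).
Qed.

Lemma atom_le_of_common_pair b s x y :
  atom meet b -> theta b x y -> theta s x y -> le meet b s.
Proof.
  intros [_ Hmin] Hbxy Hsxy.
  assert (Hbs : le meet (meet b s) b).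
  { apply le_iff_subrel. intros u v Huv. apply theta_meet in Huv. tauto. }
  destruct (Hmin _ Hbs) as [Hl | Heq].
  - exfalso. apply (proj1 (least_iff_empty _) Hl x y). apply theta_meet. auto.
  - exact Heq.
Qed.

Lemma atom_of_lower_bound_through l x y :
  theta l x y -> (forall s, theta s x y -> le meet l s) -> atom meet l.
Proof.
  intros Hlxy Hlb. split.
  - intros Hl. exact (proj1 (least_iff_empty _) Hl x y Hlxy).
  - intros c Hcl. destruct (classic (theta c x y)) as [Hcxy | Hcxy].
    + right. apply le_antisym; auto.
    + left. apply least_iff_empty.
      apply (lower_bound_missing_pair_empty Hlxy); auto.
      intros d Hd. apply le_iff_subrel. intros u v Huv.
      apply (le_iff_subrel l d); auto. apply (le_iff_subrel c l); auto.
Qed.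

Lemma zero_glb_of_no_lower_bound_through a x y :
  theta a x y ->
  (forall l, (forall s, theta s x y -> le meet l s) -> ~ theta l x y) ->
  is_glb meet (fun s => theta s x y) (comp (ad a) a).
Proof.
  intros Haxy Hno. split.
  - intros s _. apply least_iff_empty. apply theta_zero_empty.
  - intros l Hlb. apply le_iff_subrel. intros u v Huv. exfalso.
    exact (lower_bound_missing_pair_empty Haxy Hlb (Hno l Hlb) Huv).
Qed.

Lemma atomic_rep_complete : atomic_rep meet theta -> complete_rep meet theta.
Proof.
  intros Hat S m [s0 Hs0] [Hlb Hglb] x y. split.
  - intros Hmxy s Hs. exact (proj1 (le_iff_subrel _ _) (Hlb s Hs) _ _ Hmxy).
  - intros HS. destruct (Hat s0 x y (HS s0 Hs0)) as (b & Hb & Hbxy).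
    assert (Hbm : le meet b m).
    { apply Hglb. intros s Hs. exact (atom_le_of_common_pair Hb Hbxy (HS s Hs)). }
    exact (proj1 (le_iff_subrel _ _) Hbm _ _ Hbxy).
Qed.

Lemma complete_rep_atomic : complete_rep meet theta -> atomic_rep meet theta.
Proof.
  intros Hco a x y Haxy.
  destruct (classic (exists l, (forall s, theta s x y -> le meet l s) /\ theta l x y))
    as [(l & Hlb & Hlxy) | Hno].
  - exists l. split; [exact (atom_of_lower_bound_through Hlxy Hlb) | exact Hlxy].
  - exfalso. apply (theta_zero_empty (a := a) (x := x) (y := y)).
    assert (Hglb : is_glb meet (fun s => theta s x y) (comp (ad a) a)).
    { apply zero_glb_of_no_lower_bound_through; [exact Haxy |].
      intros l Hlb Hlxy. apply Hno. eauto. }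
    apply (Hco _ _ (ex_intro _ a Haxy) Hglb). auto.
Qed.

End PartialFunctionRepresentation.

Theorem mainTheorem4 (T : Type) (comp meet : T -> T -> T) (ad : T -> T)
  (X : Type) (theta : T -> X -> X -> Prop)
  (Hrep : is_pfun_rep comp meet ad theta) :
  atomic_rep meet theta <-> complete_rep meet theta.
Proof.
  split; [apply (atomic_rep_complete Hrep) | apply (complete_rep_atomic Hrep)].
Qed.
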